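(* Let $X$ be a real Hilbert space, let $\alpha\in\left]0,1\right[$, $\beta>0$, $\delta\in\mathbb{R}\setminus\{0\}$, let $\{i,j\}=\{1,2\}$, and let $R_1,R_2\colon X\to X$. Suppose $\tfrac1\delta R_i$ is $\alpha$-averaged and $R_j$ is $\tfrac1\beta$-cocoercive. Set $\bar\alpha=\tfrac1{2-\alpha}$. Then $\bar\alpha\in\left]0,1\right[$ and there exists a nonexpansive $N\colon X\to X$ such that $R_2R_1=\beta\delta\big((1-\bar\alpha)\mathrm{Id}+\bar\alpha N\big)$.
   Context: For $\alpha\in\left]0,1\right[$, $T\colon X\to X$ is $\alpha$-averaged if $T=(1-\alpha)\mathrm{Id}+\alpha N$ for some nonexpansive ($1$-Lipschitz) $N\colon X\to X$. For $\beta>0$, $T$ is $\tfrac1\beta$-cocoercive if $T=\tfrac\beta2(\mathrm{Id}+N)$ for some nonexpansive $N\colon X\to X$. *)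

From Stdlib Require Import Reals Lra.
Open Scope R_scope.

Record PreHilbert := {
  car :> Type;
  vzero : car;
  vadd : car -> car -> car;
  vopp : car -> car;
  vscal : R -> car -> car;
  inner : car -> car -> R;
  vadd_assoc : forall x y z, vadd x (vadd y z) = vadd (vadd x y) z;
  vadd_comm : forall x y, vadd x y = vadd y x;
  vadd_0 : forall x, vadd x vzero = x;
  vadd_opp : forall x, vadd x (vopp x) = vzero;
  vscal_assoc : forall a b x, vscal a (vscal b x) = vscal (a * b) x;
  vscal_1 : forall x, vscal 1 x = x;
  vscal_distr_v : forall a x y, vscal a (vadd x y) = vadd (vscal a x) (vscal a y);
  vscal_distr_s : forall a b x, vscal (a + b) x = vadd (vscal a x) (vscal b x);
  inner_sym : forall x y, inner x y = inner y x;
  inner_add_l : forall x y z, inner (vadd x y) z = inner x z + inner y z;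
  inner_scal_l : forall a x y, inner (vscal a x) y = a * inner x y;
  inner_pos : forall x, 0 <= inner x x;
  inner_def : forall x, inner x x = 0 -> x = vzero
}.

Arguments vzero {p}.
Arguments vadd {p}.
Arguments vopp {p}.
Arguments vscal {p}.
Arguments inner {p}.

Definition vsub {X : PreHilbert} (x y : X) : X := vadd x (vopp y).
Definition vnorm {X : PreHilbert} (x : X) : R := sqrt (inner x x).

Definition complete (X : PreHilbert) : Prop :=
  forall u : nat -> X,
    (forall eps, 0 < eps -> exists N, forall m n, (N <= m)%nat -> (N <= n)%nat ->
        vnorm (vsub (u m) (u n)) < eps) ->
    exists l : X, forall eps, 0 < eps -> exists N, forall n, (N <= n)%nat ->
        vnorm (vsub (u n) l) < eps.

Definition nonexpansive {X : PreHilbert} (N : X -> X) : Prop :=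
  forall x y, vnorm (vsub (N x) (N y)) <= vnorm (vsub x y).

(* T is alpha-averaged: T = (1-alpha) Id + alpha N with N nonexpansive
   (alpha in ]0,1[ is imposed separately where used). *)
Definition averaged {X : PreHilbert} (alpha : R) (T : X -> X) : Prop :=
  exists N : X -> X, nonexpansive N /\
    forall x, T x = vadd (vscal (1 - alpha) x) (vscal alpha (N x)).

(* cocoercive beta T  means  "T is (1/beta)-cocoercive":
   T = (beta/2)(Id + N) with N nonexpansive. *)
Definition cocoercive {X : PreHilbert} (beta : R) (T : X -> X) : Prop :=
  exists N : X -> X, nonexpansive N /\
    forall x, T x = vscal (beta / 2) (vadd x (N x)).

From Stdlib Require Import Reals Lra.
Open Scope R_scope.

(* An operator [T] is [a]-averaged (a > 0) iff
   [|Tx - Ty|^2 + (1-a)/a |(x - Tx) - (y - Ty)|^2 <= |x - y|^2].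
   In this form composition is transparent: adding the two inequalities and
   using [k1 |p|^2 + k2 |q|^2 >= k1 k2/(k1+k2) |p + q|^2], the composite of an
   [a]- and a [b]-averaged operator is [(a+b-2ab)/(1-ab)]-averaged, which for
   [b = 1/2] (either order) is [1/(2-a)].  Dividing a [1/beta]-cocoercive
   operator by [beta] gives a [1/2]-averaged one, and conjugating by a nonzero
   scaling preserves averagedness, so [R2 R1 / (beta delta)] is such a
   composite. *)

Section VectorAlgebra.
Variable X : PreHilbert.

Lemma vadd_0_l (x : X) : vadd vzero x = x.
Proof. rewrite vadd_comm; apply vadd_0. Qed.

Lemma vscal_0 (x : X) : vscal 0 x = vzero.
Proof.
  assert (Hdup : vscal 0 x = vadd (vscal 0 x) (vscal 0 x)).
  { rewrite <- vscal_distr_s; f_equal; ring. }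
  assert (Hcancel := f_equal (fun v => vadd v (vopp (vscal 0 x))) Hdup); simpl in Hcancel.
  rewrite <- vadd_assoc, vadd_opp, vadd_0 in Hcancel.
  symmetry; exact Hcancel.
Qed.

Lemma vopp_scal (x : X) : vopp x = vscal (-1) x.
Proof.
  assert (Hx : vadd x (vscal (-1) x) = vzero).
  { rewrite <- (vscal_1 X x) at 1; rewrite <- vscal_distr_s.
    replace (1 + -1) with 0 by ring; apply vscal_0. }
  rewrite <- (vadd_0 X (vopp x)), <- Hx, vadd_assoc.
  rewrite (vadd_comm X (vopp x) x), vadd_opp; apply vadd_0_l.
Qed.

Lemma vadd_vsub (x y : X) : vadd y (vsub x y) = x.
Proof.
  unfold vsub; rewrite vadd_comm, <- vadd_assoc.
  rewrite (vadd_comm X (vopp y) y), vadd_opp; apply vadd_0.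
Qed.

Lemma vscal_inv_cancel (k : R) (x : X) : k <> 0 -> vscal k (vscal (/ k) x) = x.
Proof. intros Hk; rewrite vscal_assoc, Rinv_r by exact Hk; apply vscal_1. Qed.

Lemma inner_add_r (x y z : X) : inner x (vadd y z) = inner x y + inner x z.
Proof. rewrite inner_sym, inner_add_l, (inner_sym X y), (inner_sym X z); reflexivity. Qed.

Lemma inner_scal_r (a : R) (x y : X) : inner x (vscal a y) = a * inner x y.
Proof. rewrite inner_sym, inner_scal_l, (inner_sym X y); reflexivity. Qed.

End VectorAlgebra.

Definition sqnorm {X : PreHilbert} (x : X) : R := inner x x.

(* Expands every squared norm of a linear combination into a polynomial in
   the inner products of the underlying vectors, with [inner b a] turned into
   [inner a b] whenever both occur, so that [ring]/[field] can finish. *)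
Ltac inner_expand :=
  unfold sqnorm, vsub; rewrite ?vopp_scal;
  repeat rewrite ?inner_add_l, ?inner_add_r, ?inner_scal_l, ?inner_scal_r;
  repeat match goal with
  | |- context [@inner ?X ?a ?b] =>
      match goal with
      | |- context [@inner X b a] =>
          tryif constr_eq a b then fail else rewrite (inner_sym X b a)
      end
  end.

Lemma nonexpansiveP {X : PreHilbert} (N : X -> X) :
  nonexpansive N <-> forall x y, sqnorm (vsub (N x) (N y)) <= sqnorm (vsub x y).
Proof.
  split; intros HN x y.
  - apply sqrt_le_0; [apply inner_pos | apply inner_pos | apply HN].
  - apply sqrt_le_1_alt, HN.
Qed.

Lemma averaged_ext {X : PreHilbert} (a : R) (F G : X -> X) :
  (forall x, F x = G x) -> averaged a F -> averaged a G.
Proof.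
  intros HFG [N [HN HF]]; exists N; split; [exact HN |].
  intros x; rewrite <- HFG; apply HF.
Qed.

Lemma cocoercive_averaged_half {X : PreHilbert} (b : R) (T : X -> X) :
  b <> 0 -> cocoercive b T -> averaged (1 / 2) (fun x => vscal (/ b) (T x)).
Proof.
  intros Hb [N [HN HT]]; exists N; split; [exact HN |].
  intros x; rewrite HT, vscal_assoc, vscal_distr_v.
  f_equal; f_equal; field; exact Hb.
Qed.

Lemma averaged_conj_scale {X : PreHilbert} (a k : R) (T : X -> X) :
  k <> 0 -> averaged a T -> averaged a (fun y => vscal (/ k) (T (vscal k y))).
Proof.
  intros Hk [N [HN HT]].
  exists (fun y => vscal (/ k) (N (vscal k y))); split.
  - apply nonexpansiveP; intros x y.
    apply Rle_trans with (/ k ^ 2 * sqnorm (vsub (vscal k x) (vscal k y))).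
    + replace (sqnorm (vsub (vscal (/ k) (N (vscal k x))) (vscal (/ k) (N (vscal k y)))))
        with (/ k ^ 2 * sqnorm (vsub (N (vscal k x)) (N (vscal k y))))
        by (inner_expand; field; exact Hk).
      apply Rmult_le_compat_l.
      * apply Rlt_le, Rinv_0_lt_compat; rewrite <- Rsqr_pow2; apply Rsqr_pos_lt, Hk.
      * apply (proj1 (nonexpansiveP N) HN).
    + right; inner_expand; field; exact Hk.
  - intros y; rewrite HT, vscal_distr_v, !vscal_assoc.
    f_equal; f_equal; field; exact Hk.
Qed.

Definition nonexpansive_gap {X : PreHilbert} (k : R) (T : X -> X) : Prop :=
  forall x y, sqnorm (vsub (T x) (T y))
              + k * sqnorm (vsub (vsub x (T x)) (vsub y (T y)))
              <= sqnorm (vsub x y).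

Lemma averaged_gapP {X : PreHilbert} (a : R) (T : X -> X) :
  0 < a -> averaged a T <-> nonexpansive_gap ((1 - a) / a) T.
Proof.
  intros Ha; split.
  - intros [N [HN HT]] x y.
    assert (HNxy := proj1 (nonexpansiveP N) HN x y).
    rewrite !HT.
    replace (sqnorm (vsub (vadd (vscal (1 - a) x) (vscal a (N x)))
                          (vadd (vscal (1 - a) y) (vscal a (N y))))
             + (1 - a) / a * sqnorm (vsub (vsub x (vadd (vscal (1 - a) x) (vscal a (N x))))
                                          (vsub y (vadd (vscal (1 - a) y) (vscal a (N y))))))
      with (sqnorm (vsub x y) + a * (sqnorm (vsub (N x) (N y)) - sqnorm (vsub x y)))
      by (inner_expand; field; lra).
    nra.
  - intros Hgap.
    exists (fun x => vscal (/ a) (vsub (T x) (vscal (1 - a) x))); split.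
    + apply nonexpansiveP; intros x y.
      assert (Hxy := Hgap x y).
      replace (sqnorm (vsub (vscal (/ a) (vsub (T x) (vscal (1 - a) x)))
                            (vscal (/ a) (vsub (T y) (vscal (1 - a) y)))))
        with (sqnorm (vsub x y)
              + / a * (sqnorm (vsub (T x) (T y))
                       + (1 - a) / a * sqnorm (vsub (vsub x (T x)) (vsub y (T y)))
                       - sqnorm (vsub x y)))
        by (inner_expand; field; lra).
      assert (0 < / a) by (apply Rinv_0_lt_compat; exact Ha).
      nra.
    + intros x; rewrite vscal_inv_cancel by lra.
      symmetry; apply vadd_vsub.
Qed.

Lemma sqnorm_add_weighted_le {X : PreHilbert} (k1 k2 : R) (p q : X) :
  0 < k1 -> 0 < k2 ->
  k1 * k2 / (k1 + k2) * sqnorm (vadd p q) <= k1 * sqnorm p + k2 * sqnorm q.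
Proof.
  intros Hk1 Hk2.
  assert (Hsq : 0 <= sqnorm (vsub (vscal k1 p) (vscal k2 q))) by apply inner_pos.
  assert (Hid : k1 * sqnorm p + k2 * sqnorm q - k1 * k2 / (k1 + k2) * sqnorm (vadd p q)
                = / (k1 + k2) * sqnorm (vsub (vscal k1 p) (vscal k2 q))).
  { inner_expand; field; lra. }
  assert (0 < / (k1 + k2)) by (apply Rinv_0_lt_compat; lra).
  nra.
Qed.

Lemma nonexpansive_gap_comp {X : PreHilbert} (k1 k2 : R) (S T : X -> X) :
  0 < k1 -> 0 < k2 -> nonexpansive_gap k1 S -> nonexpansive_gap k2 T ->
  nonexpansive_gap (k1 * k2 / (k1 + k2)) (fun x => T (S x)).
Proof.
  intros Hk1 Hk2 HS HT x y.
  assert (Hx := HS x y); assert (Hy := HT (S x) (S y)).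
  set (p := vsub (vsub x (S x)) (vsub y (S y))) in Hx.
  set (q := vsub (vsub (S x) (T (S x))) (vsub (S y) (T (S y)))) in Hy.
  assert (Hpq := sqnorm_add_weighted_le k1 k2 p q Hk1 Hk2).
  replace (sqnorm (vsub (vsub x (T (S x))) (vsub y (T (S y)))))
    with (sqnorm (vadd p q)) by (unfold p, q; inner_expand; ring).
  lra.
Qed.

(* The composition formula of Ogura and Yamada. *)
Lemma averaged_comp {X : PreHilbert} (a b : R) (S T : X -> X) :
  0 < a < 1 -> 0 < b < 1 -> averaged a S -> averaged b T ->
  averaged ((a + b - 2 * a * b) / (1 - a * b)) (fun x => T (S x)).
Proof.
  intros Ha Hb HS HT.
  assert (Hab : 0 < a * b < 1) by nra.
  assert (Hnum : 0 < a + b - 2 * a * b) by nra.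
  apply averaged_gapP in HS; [| lra]; apply averaged_gapP in HT; [| lra].
  apply averaged_gapP; [apply Rdiv_lt_0_compat; lra |].
  replace ((1 - (a + b - 2 * a * b) / (1 - a * b)) / ((a + b - 2 * a * b) / (1 - a * b)))
    with ((1 - a) / a * ((1 - b) / b) / ((1 - a) / a + (1 - b) / b))
    by (field; repeat split; nra).
  apply nonexpansive_gap_comp; auto; apply Rdiv_lt_0_compat; lra.
Qed.

Lemma averaged_comp_half_r {X : PreHilbert} (a : R) (S T : X -> X) :
  0 < a < 1 -> averaged a S -> averaged (1 / 2) T ->
  averaged (/ (2 - a)) (fun x => T (S x)).
Proof.
  intros Ha HS HT.
  replace (/ (2 - a)) with ((a + 1 / 2 - 2 * a * (1 / 2)) / (1 - a * (1 / 2)))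
    by (field; lra).
  apply averaged_comp; auto; lra.
Qed.

Lemma averaged_comp_half_l {X : PreHilbert} (a : R) (S T : X -> X) :
  0 < a < 1 -> averaged (1 / 2) S -> averaged a T ->
  averaged (/ (2 - a)) (fun x => T (S x)).
Proof.
  intros Ha HS HT.
  replace (/ (2 - a)) with ((1 / 2 + a - 2 * (1 / 2) * a) / (1 - (1 / 2) * a))
    by (field; lra).
  apply averaged_comp; auto; lra.
Qed.

Theorem mainTheorem8 (X : PreHilbert) (HX : complete X)
  (alpha beta delta : R) (R1 R2 : X -> X)
  (Halpha : 0 < alpha < 1) (Hbeta : 0 < beta) (Hdelta : delta <> 0)
  (Hcase :
     (averaged alpha (fun x => vscal (/ delta) (R1 x)) /\ cocoercive beta R2) \/
     (averaged alpha (fun x => vscal (/ delta) (R2 x)) /\ cocoercive beta R1)) :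
  let alphabar := / (2 - alpha) in
  0 < alphabar < 1 /\
  exists N : X -> X, nonexpansive N /\
    forall x, R2 (R1 x) =
      vscal (beta * delta) (vadd (vscal (1 - alphabar) x) (vscal alphabar (N x))).
Proof.
  intros alphabar; split.
  { split; [apply Rinv_0_lt_compat; lra |].
    rewrite <- Rinv_1; apply Rinv_lt_contravar; lra. }
  assert (Hbd : beta * delta <> 0) by (apply Rmult_integral_contrapositive; lra).
  assert (HF : averaged alphabar (fun x => vscal (/ (beta * delta)) (R2 (R1 x)))).
  { destruct Hcase as [[H1 H2] | [H1 H2]].
    - apply (averaged_ext _ (fun x =>
        vscal (/ delta) (vscal (/ beta) (R2 (vscal delta (vscal (/ delta) (R1 x))))))).
      + intros x; rewrite vscal_inv_cancel, vscal_assoc by exact Hdelta.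
        f_equal; field; lra.
      + apply (averaged_comp_half_r alpha (fun x => vscal (/ delta) (R1 x))
          (fun y => vscal (/ delta) (vscal (/ beta) (R2 (vscal delta y))))); [lra | exact H1 |].
        apply (averaged_conj_scale _ delta (fun z => vscal (/ beta) (R2 z))); [exact Hdelta |].
        apply cocoercive_averaged_half; [lra | exact H2].
    - apply (averaged_ext _ (fun x =>
        vscal (/ beta) (vscal (/ delta) (R2 (vscal beta (vscal (/ beta) (R1 x))))))).
      + intros x; rewrite vscal_inv_cancel, vscal_assoc by lra.
        f_equal; field; lra.
      + apply (averaged_comp_half_l alpha (fun x => vscal (/ beta) (R1 x))
          (fun y => vscal (/ beta) (vscal (/ delta) (R2 (vscal beta y))))); [lra | |].
        * apply cocoercive_averaged_half; [lra | exact H2].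
        * apply (averaged_conj_scale _ beta (fun z => vscal (/ delta) (R2 z))); [lra | exact H1]. }
  destruct HF as [N [HN HE]]; exists N; split; [exact HN |].
  intros x; rewrite <- HE; symmetry; apply vscal_inv_cancel, Hbd.
Qed.
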